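(* For every $\varepsilon>0$, every locally $\varepsilon$-balanced $2$-edge-coloured $K_n$ contains at least $\varepsilon^4n^4/10^5$ copies of $P_3^{\circ}$, $C_4$ or $\overline{C_4}$ (counted together).
   Context: Colours are red and blue. A $2$-edge-coloured $K_n$ is locally $\varepsilon$-balanced if every vertex is incident to at least $\varepsilon n$ red and at least $\varepsilon n$ blue edges. $C_4$ is the $2$-edge-coloured $K_4$ whose red edges form a $4$-cycle (the other two edges blue); $\overline{C_4}$ is $C_4$ with colours swapped. $P_3^{\circ}$ is the $2$-edge-coloured $K_4$ on vertices $1,2,3,4$ in which the edges $12,23,34$ are blue and the edges $13,14,24$ are red. A copy of a coloured graph $H$ in a coloured graph $G$ is an injection of $V(H)$ into $V(G)$ mapping each edge of $H$ to an edge of $G$ of the same colour. *)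

From HB Require Import structures.
From mathcomp Require Import all_boot all_order all_algebra.
Set Implicit Arguments. Unset Strict Implicit. Unset Printing Implicit Defensive.
Import Order.TTheory GRing.Theory Num.Theory.

(* A 2-edge-coloured K_n: vertex set 'I_n, colour c u v for u <> v;
   true = red, false = blue.  Values on the diagonal are irrelevant. *)
Definition sym_colouring (n : nat) (c : 'I_n -> 'I_n -> bool) : Prop :=
  forall u v : 'I_n, c u v = c v u.

Definition red_deg (n : nat) (c : 'I_n -> 'I_n -> bool) (v : 'I_n) : nat :=
  #|[set u : 'I_n | (u != v) && c v u]|.

Definition blue_deg (n : nat) (c : 'I_n -> 'I_n -> bool) (v : 'I_n) : nat :=
  #|[set u : 'I_n | (u != v) && ~~ c v u]|.

Definition locally_balanced (R : realFieldType) (eps : R) (n : nat)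
    (c : 'I_n -> 'I_n -> bool) : Prop :=
  forall v : 'I_n,
    (eps * n%:R <= (red_deg c v)%:R)%R /\ (eps * n%:R <= (blue_deg c v)%:R)%R.

(* Coloured K_4 patterns on vertices 0,1,2,3 (paper: 1,2,3,4). *)
(* C4: red edges form the 4-cycle 0-1-2-3-0; 02 and 13 blue. *)
Definition C4 (i j : 'I_4) : bool := odd (i + j).
Definition C4bar (i j : 'I_4) : bool := ~~ odd (i + j).
(* P3o: 01,12,23 blue; 02,03,13 red. *)
Definition P3o (i j : 'I_4) : bool := ~~ ((i.+1 == j :> nat) || (j.+1 == i :> nat)).

Definition copies (n : nat) (c : 'I_n -> 'I_n -> bool) (H : 'I_4 -> 'I_4 -> bool)
    : {set {ffun 'I_4 -> 'I_n}} :=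
  [set f : {ffun 'I_4 -> 'I_n} | injectiveb f &&
     [forall i : 'I_4, forall j : 'I_4, (i != j) ==> (c (f i) (f j) == H i j)]].

Definition num_copies (n : nat) (c : 'I_n -> 'I_n -> bool) (H : 'I_4 -> 'I_4 -> bool)
    : nat := #|copies c H|.

From HB Require Import structures.
From mathcomp Require Import all_boot all_order all_algebra.
From mathcomp Require Import zify.
Import Order.TTheory GRing.Theory Num.Theory.

Set Implicit Arguments. Unset Strict Implicit. Unset Printing Implicit Defensive.

(* Count alternating 4-cycles: quadruples (a, b, x, d) with ab, xd red and bx, da blue.
   Whatever the colours of the diagonals ax and bd, such a quadruple spans a copy of
   C4, P3o or C4bar; each copy of C4 or C4bar arises from at most one quadruple and
   each copy of P3o from at most two.  So it suffices to find E^4 / 7^4 alternating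
   cycles when all red and blue degrees are at least E.
   Let P(u, v) be the number of paths u - w - v with uw red and wv blue.  The number
   of alternating cycles is sum_(u, v) P(u, v) P(v, u), and P(u, v) <= P(v, u) as soon
   as d_red(u) <= d_red(v).  Double counting gives sum_v P(u, v)^2 = sum of the blue
   codegrees of the pairs (x, y) of red neighbours of u, and a pair of blue codegree
   less than t has P(x, y), P(y, x) >= E - t.  Take q = E / 8 and t = 4q.  Either some
   u has more than half of its pairs of red neighbours of codegree < t, and these
   pairs alone give q^2 E^2 cycles; or sum_v P(u, v)^2 >= 2q d_red(u)^2 for every u,
   and then each of the q vertices of smallest red degree gets at least q E^2 from
   the terms with d_red(v) >= d_red(u). *)

Lemma card_set_sum (T : finType) (P : pred T) : #|[set x | P x]| = \sum_x P x.
Proof.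
rewrite -sum1dep_card big_mkcond; apply: eq_bigr => x _; by case: (P x).
Qed.

Lemma card_few_below (T : finType) (f : T -> nat) m : m <= #|T| ->
  m <= #|[set u | #|[set v | f v < f u]| < m]|.
Proof.
move=> m_le; set L := [set u | _]; rewrite leqNgt; apply/negP => L_small.
have [u0 u0_out] : exists u, u \in ~: L.
  by apply/card_gt0P; have := cardsC L; lia.
have [u u_out u_min] := arg_minnP f u0_out.
have below_L : [set v | f v < f u] \subset L.
  apply/subsetP => v; rewrite inE => fvu; rewrite -[v \in L]negbK -in_setC.
  by apply/negP => v_out; have := u_min v v_out; rewrite leqNgt fvu.
have u_low : #|[set v | f v < f u]| < m.
  exact: leq_ltn_trans (subset_leq_card below_L) L_small.
by have : u \in ~: L := u_out; rewrite !inE u_low.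
Qed.

Lemma sum_pair (A B : finType) (F : A * B -> nat) : \sum_t F t = \sum_a \sum_b F (a, b).
Proof. by rewrite pair_bigA; apply: eq_bigr => -[a b]. Qed.

Section AlternatingCycles.
Variables (n : nat) (c : 'I_n -> 'I_n -> bool).
Hypothesis c_sym : sym_colouring c.

Definition red_edge (x w : 'I_n) : bool := (w != x) && c x w.
Definition blue_edge (x w : 'I_n) : bool := (w != x) && ~~ c x w.

Definition rb_paths (x y : 'I_n) : nat := \sum_w red_edge x w * blue_edge y w.
Definition red_codeg (x y : 'I_n) : nat := \sum_w red_edge x w * red_edge y w.
Definition blue_codeg (x y : 'I_n) : nat := \sum_w blue_edge x w * blue_edge y w.

Definition num_alt_cycles : nat := \sum_x \sum_y rb_paths x y * rb_paths y x.

Definition sparse_pairs (u : 'I_n) (t : nat) : nat :=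
  \sum_x \sum_y red_edge u x * red_edge u y * (blue_codeg x y < t).

Lemma red_degE x : red_deg c x = \sum_w red_edge x w.
Proof. exact: card_set_sum. Qed.

Lemma blue_degE x : blue_deg c x = \sum_w blue_edge x w.
Proof. exact: card_set_sum. Qed.

Lemma red_edgeC x y : red_edge x y = red_edge y x.
Proof. by rewrite /red_edge eq_sym c_sym. Qed.

Lemma blue_edgeC x y : blue_edge x y = blue_edge y x.
Proof. by rewrite /blue_edge eq_sym c_sym. Qed.

Lemma red_codegC x y : red_codeg x y = red_codeg y x.
Proof. by apply: eq_bigr => w _; rewrite mulnC. Qed.

Lemma blue_codegC x y : blue_codeg x y = blue_codeg y x.
Proof. by apply: eq_bigr => w _; rewrite mulnC. Qed.

Lemma sum_split_by_colour x (f : 'I_n -> nat) :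
  \sum_w f w = \sum_w red_edge x w * f w + \sum_w blue_edge x w * f w + f x.
Proof.
have -> : f x = \sum_w (w == x) * f w.
  by rewrite (bigD1 x) //= eqxx mul1n big1 ?addn0 // => w /negbTE ->.
rewrite -!big_split; apply: eq_bigr => w _ /=.
by rewrite /red_edge /blue_edge; case: (w == x); case: (c x w); rewrite /= ?mul0n ?mul1n ?addn0.
Qed.

Lemma red_deg_split u v : red_deg c u = red_codeg v u + rb_paths u v + red_edge u v.
Proof.
rewrite red_degE (sum_split_by_colour v); congr (_ + _ + _).
by apply: eq_bigr => w _; rewrite mulnC.
Qed.

Lemma blue_deg_split x y : blue_deg c y = rb_paths x y + blue_codeg x y + blue_edge y x.
Proof. by rewrite blue_degE (sum_split_by_colour x). Qed.

Lemma blue_deg_le x y : blue_deg c y <= rb_paths x y + blue_codeg x y + 1.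
Proof. by rewrite (blue_deg_split x) leq_add2l leq_b1. Qed.

Lemma rb_paths_le_red_deg u v : rb_paths u v <= red_deg c u.
Proof. rewrite (red_deg_split u v); lia. Qed.

Lemma rb_paths_mono u v : red_deg c u <= red_deg c v -> rb_paths u v <= rb_paths v u.
Proof. rewrite (red_deg_split u v) (red_deg_split v u) red_codegC red_edgeC; lia. Qed.

Lemma rb_paths_le_num_alt_cycles u v : rb_paths u v * rb_paths v u <= num_alt_cycles.
Proof.
rewrite /num_alt_cycles (bigD1 u) //= (bigD1 v) //= -addnA; exact: leq_addr.
Qed.

Lemma num_alt_cycles_ge_upward (L : {set 'I_n}) :
  \sum_(u in L) \sum_(v | red_deg c u <= red_deg c v) rb_paths u v ^ 2 <= num_alt_cycles.
Proof.
rewrite /num_alt_cycles [X in _ <= X](bigID [in L]) /=; apply: leq_trans (leq_addr _ _).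
apply: leq_sum => u _; rewrite [X in _ <= X](bigID (fun v => red_deg c u <= red_deg c v)) /=.
apply: leq_trans (leq_addr _ _); apply: leq_sum => v uv.
by rewrite -mulnn leq_mul2l rb_paths_mono ?orbT.
Qed.

Lemma red_deg_sqr u : red_deg c u ^ 2 = \sum_x \sum_y red_edge u x * red_edge u y.
Proof.
by rewrite red_degE -mulnn big_distrl; apply: eq_bigr => x _; rewrite big_distrr.
Qed.

Lemma sum_rb_paths_sqr u :
  \sum_v rb_paths u v ^ 2 = \sum_x \sum_y red_edge u x * red_edge u y * blue_codeg x y.
Proof.
transitivity (\sum_v \sum_x \sum_y
                red_edge u x * blue_edge v x * (red_edge u y * blue_edge v y)).
  apply: eq_bigr => v _; rewrite -mulnn big_distrl; apply: eq_bigr => x _ /=.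
  exact: big_distrr.
rewrite exchange_big; apply: eq_bigr => x _; rewrite exchange_big.
apply: eq_bigr => y _; rewrite /blue_codeg big_distrr; apply: eq_bigr => v _ /=.
by rewrite (blue_edgeC v x) (blue_edgeC v y) mulnACA.
Qed.

Lemma sum_rb_paths_sqr_ge u t :
  t * red_deg c u ^ 2 <= \sum_v rb_paths u v ^ 2 + t * sparse_pairs u t.
Proof.
rewrite sum_rb_paths_sqr red_deg_sqr /sparse_pairs !big_distrr -big_split /=.
apply: leq_sum => x _; rewrite !big_distrr -big_split /=; apply: leq_sum => y _.
case: (red_edge u x); case: (red_edge u y); rewrite ?mul0n ?muln0 //= !mul1n.
by case: ltnP => [|t_le]; rewrite ?muln1 ?muln0 ?addn0 ?leq_addl.
Qed.

Lemma sum_rb_paths_sqr_le_upward u :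
  \sum_v rb_paths u v ^ 2 <= \sum_(v | red_deg c u <= red_deg c v) rb_paths u v ^ 2
     + #|[set v | red_deg c v < red_deg c u]| * red_deg c u ^ 2.
Proof.
rewrite (bigID (fun v => red_deg c u <= red_deg c v)) /= leq_add2l card_set_sum.
rewrite big_distrl /= big_mkcond /=; apply: leq_sum => v _; rewrite ltnNge.
case: (red_deg c u <= red_deg c v) => //=; rewrite mul1n leq_exp2r //.
exact: rb_paths_le_red_deg.
Qed.

Section MinDegree.
Variable E : nat.
Hypothesis red_deg_ge : forall v, E <= red_deg c v.
Hypothesis blue_deg_ge : forall v, E <= blue_deg c v.

Lemma sparse_pairs_le_num_alt_cycles u t : sparse_pairs u t * (E - t) ^ 2 <= num_alt_cycles.
Proof.
rewrite /sparse_pairs /num_alt_cycles big_distrl /=; apply: leq_sum => x _.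
rewrite big_distrl /=; apply: leq_sum => y _.
case: (red_edge u x); case: (red_edge u y); rewrite ?mul0n //=.
case: ltnP => [codeg_lt|]; rewrite ?mul0n // !mul1n -mulnn.
have := blue_deg_le x y; have := blue_deg_le y x; rewrite blue_codegC.
have := blue_deg_ge x; have := blue_deg_ge y.
by move=> *; apply: leq_mul; lia.
Qed.

Lemma num_alt_cycles_ge_sparse_vertex u q : 8 * q <= E ->
  red_deg c u ^ 2 < 2 * sparse_pairs u (4 * q) -> q ^ 2 * E ^ 2 <= num_alt_cycles.
Proof.
move=> q_le sparse_u.
have sparse_cycles := sparse_pairs_le_num_alt_cycles u (4 * q).
have E_sqr : E ^ 2 <= red_deg c u ^ 2 by rewrite leq_exp2r.
have gap : (4 * q) ^ 2 <= (E - 4 * q) ^ 2 by rewrite leq_exp2r //; lia.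
move: sparse_u E_sqr gap sparse_cycles; rewrite -!mulnn.
set N := sparse_pairs _ _; set Y := red_deg c u * _; set X := (E - _) * _ => *.
have : E * E * (4 * q * (4 * q)) <= 2 * N * X by apply: leq_mul; lia.
(* 16 q^2 E^2 <= 2 N X <= 2 num_alt_cycles *)
nia.
Qed.

Lemma num_alt_cycles_ge_dense q : q <= #|'I_n| ->
  (forall u, 2 * sparse_pairs u (4 * q) <= red_deg c u ^ 2) -> q ^ 2 * E ^ 2 <= num_alt_cycles.
Proof.
move=> q_le_n dense; have := card_few_below (red_deg c) q_le_n.
set L := [set u | _] => q_le_L.
apply: leq_trans (num_alt_cycles_ge_upward L).
apply: leq_trans (_ : \sum_(u in L) q * E ^ 2 <= _).
  by rewrite sum_nat_const mulnA leq_mul2r -mulnn leq_mul2r q_le_L !orbT.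
apply: leq_sum => u; rewrite inE => u_low.
have := sum_rb_paths_sqr_ge u (4 * q); have := sum_rb_paths_sqr_le_upward u.
have := dense u; have : E ^ 2 <= red_deg c u ^ 2 by rewrite leq_exp2r.
set D := #|_| in u_low *; set Y := red_deg c u ^ 2; set N := sparse_pairs _ _.
set S := \sum_v _; set U := \sum_(v | _) _ => E_sqr dense_u S_le S_ge.
apply: leq_trans (_ : q * Y <= U); first by rewrite leq_mul2l E_sqr orbT.
have : D * Y <= (q - 1) * Y by apply: leq_mul => //; lia.
(* 4q Y <= S + 4q N <= U + (q - 1) Y + 2q Y *)
nia.
Qed.

Hypothesis n_gt0 : 0 < n.

Lemma num_alt_cycles_ge q : 8 * q <= E -> q ^ 2 * E ^ 2 <= num_alt_cycles.
Proof.
move=> q_le.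
have [/existsP [u sparse_u]|] := boolP [exists u, red_deg c u ^ 2 < 2 * sparse_pairs u (4 * q)].
  exact: num_alt_cycles_ge_sparse_vertex sparse_u.
rewrite negb_exists => /forallP dense; apply: num_alt_cycles_ge_dense => [|u].
  have deg_le : red_deg c (Ordinal n_gt0) <= #|'I_n| by exact: max_card.
  by apply: leq_trans deg_le; apply: leq_trans (red_deg_ge _); lia.
by rewrite leqNgt dense.
Qed.

Lemma num_alt_cycles_gt0 : 0 < E -> 0 < num_alt_cycles.
Proof.
move=> E_gt0.
have [u _ u_min] := arg_minnP (red_deg c) (isT : predT (Ordinal n_gt0)).
have /card_gt0P [x] : 0 < red_deg c u by apply: leq_trans (red_deg_ge u).
rewrite inE => ux.
have /card_gt0P [v] : 0 < blue_deg c x by apply: leq_trans (blue_deg_ge x).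
rewrite inE => xv.
have rb_gt0 : 0 < rb_paths u v.
  rewrite /rb_paths (bigD1 x) //= blue_edgeC; apply: leq_trans (leq_addr _ _).
  by rewrite /red_edge /blue_edge ux xv.
apply: leq_trans (rb_paths_le_num_alt_cycles u v).
by rewrite muln_gt0 rb_gt0 (leq_trans rb_gt0) // rb_paths_mono ?u_min.
Qed.

Lemma num_alt_cycles_ge_pow4 : E ^ 4 <= 7 ^ 4 * num_alt_cycles.
Proof.
set q := E %/ 8; have q_le : 8 * q <= E by rewrite mulnC leq_trunc_div.
have E_lt : E < 8 * q + 8 by rewrite /q; lia.
have [q0|q_gt0] := posnP q.
  (* Then E < 8, and a single alternating cycle is enough. *)
  have [->|E_gt0] := posnP E; first by [].
  apply: leq_trans (_ : 7 ^ 4 * 1 <= _); first by rewrite muln1 leq_exp2r //; lia.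
  by rewrite leq_mul2l num_alt_cycles_gt0.
apply: leq_trans (_ : (15 * q) ^ 2 * E ^ 2 <= _).
  have -> : E ^ 4 = E ^ 2 * E ^ 2 by rewrite -expnD.
  by rewrite leq_mul2r leq_exp2r //; lia.
by rewrite expnMn -mulnA leq_mul ?num_alt_cycles_ge.
Qed.

End MinDegree.

Definition quad (a0 a1 a2 a3 : 'I_n) : {ffun 'I_4 -> 'I_n} :=
  [ffun i => tnth [tuple a0; a1; a2; a3] i].

Lemma codom_quad a0 a1 a2 a3 : codom (quad a0 a1 a2 a3) = [:: a0; a1; a2; a3].
Proof. by rewrite codomE !enum_ordSl enum_ord0 /= !ffunE. Qed.

Lemma quad_inj a0 a1 a2 a3 b0 b1 b2 b3 : quad a0 a1 a2 a3 = quad b0 b1 b2 b3 ->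
  [/\ a0 = b0, a1 = b1, a2 = b2 & a3 = b3].
Proof.
by move/(congr1 (fun f : {ffun _} => codom f)); rewrite /= !codom_quad => -[-> -> -> ->].
Qed.

Lemma quad_injb a0 a1 a2 a3 : injectiveb (quad a0 a1 a2 a3) = uniq [:: a0; a1; a2; a3].
Proof. by rewrite /dinjectiveb -codom_quad codomE. Qed.

Lemma quad_in_copies (h : nat -> nat -> bool) a0 a1 a2 a3 :
  (forall i j, h i j = h j i) ->
  a0 != a1 -> a0 != a2 -> a0 != a3 -> a1 != a2 -> a1 != a3 -> a2 != a3 ->
  c a0 a1 = h 0 1 -> c a0 a2 = h 0 2 -> c a0 a3 = h 0 3 ->
  c a1 a2 = h 1 2 -> c a1 a3 = h 1 3 -> c a2 a3 = h 2 3 ->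
  quad a0 a1 a2 a3 \in copies c (fun i j : 'I_4 => h i j).
Proof.
move=> h_sym d01 d02 d03 d12 d13 d23 h01 h02 h03 h12 h13 h23.
rewrite inE quad_injb /= !inE !negb_or d01 d02 d03 d12 d13 d23 /=.
apply/forallP => -[[|[|[|[|i]]]] Hi]; apply/forallP => -[[|[|[|[|j]]]] Hj] //=;
  rewrite !ffunE /=; apply/eqP;
  by rewrite ?h01 ?h02 ?h03 ?h12 ?h13 ?h23 // c_sym h_sym ?h01 ?h02 ?h03 ?h12 ?h13 ?h23.
Qed.

Lemma card_le_num_copies (T : finType) (A : {set T}) (g : T -> {ffun 'I_4 -> 'I_n}) H :
  injective g -> {in A, forall t, g t \in copies c H} -> #|A| <= num_copies c H.
Proof.
move=> g_inj gA; rewrite -(card_imset A g_inj); apply/subset_leq_card/subsetP.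
by move=> _ /imsetP [t tA ->]; exact: gA.
Qed.

Definition alt_cycle (t : 'I_n * 'I_n * 'I_n * 'I_n) : bool :=
  let: (a, b, x, d) := t in [&& red_edge a b, blue_edge x b, red_edge x d & blue_edge a d].

Lemma num_alt_cycles_card : num_alt_cycles = #|[set t | alt_cycle t]|.
Proof.
rewrite card_set_sum !sum_pair /num_alt_cycles; apply: eq_bigr => a _.
rewrite exchange_big; apply: eq_bigr => x _; rewrite /rb_paths big_distrl.
apply: eq_bigr => b _ /=; rewrite big_distrr; apply: eq_bigr => d _ /=.
by case: (red_edge a b); case: (blue_edge x b); case: (red_edge x d); case: (blue_edge a d).
Qed.

Lemma alt_cycleP a b x d : alt_cycle (a, b, x, d) ->
  [/\ [/\ a != b, a != x & a != d], [/\ b != x, b != d & x != d] &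
      [/\ c a b, c x d, c x b = false & c a d = false]].
Proof.
rewrite /= /red_edge /blue_edge.
move=> /and4P [/andP [ba ab] /andP [bx /negbTE xb] /andP [dx xd] /andP [da /negbTE ad]].
have ax : a != x by apply/eqP => a_x; move: ab; rewrite a_x xb.
have bd : b != d by apply/eqP => b_d; move: ab; rewrite b_d ad.
by split; split; rewrite // eq_sym.
Qed.

Lemma alt_cycle_C4 a b x d : alt_cycle (a, b, x, d) -> c a x -> c b d ->
  quad a b d x \in copies c C4.
Proof.
move=> /alt_cycleP [[? ? ?] [? ? ?] [? ? ? ?]] ? ?.
apply: (quad_in_copies (h := fun i j => odd (i + j))) => //;
  try by [rewrite eq_sym | rewrite c_sym].
by move=> i j; rewrite addnC.
Qed.

Lemma alt_cycle_P3o a b x d : alt_cycle (a, b, x, d) -> c a x -> c b d = false ->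
  quad x b d a \in copies c P3o.
Proof.
move=> /alt_cycleP [[? ? ?] [? ? ?] [? ? ? ?]] ? ?.
apply: (quad_in_copies (h := fun i j => ~~ ((i.+1 == j) || (j.+1 == i)))) => //;
  try by [rewrite eq_sym | rewrite c_sym].
by move=> i j; rewrite orbC.
Qed.

Lemma alt_cycle_P3o' a b x d : alt_cycle (a, b, x, d) -> c a x = false -> c b d ->
  quad b x a d \in copies c P3o.
Proof.
move=> /alt_cycleP [[? ? ?] [? ? ?] [? ? ? ?]] ? ?.
apply: (quad_in_copies (h := fun i j => ~~ ((i.+1 == j) || (j.+1 == i)))) => //;
  try by [rewrite eq_sym | rewrite c_sym].
by move=> i j; rewrite orbC.
Qed.

Lemma alt_cycle_C4bar a b x d : alt_cycle (a, b, x, d) -> c a x = false -> c b d = false ->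
  quad a x b d \in copies c C4bar.
Proof.
move=> /alt_cycleP [[? ? ?] [? ? ?] [? ? ? ?]] ? ?.
apply: (quad_in_copies (h := fun i j => ~~ odd (i + j))) => //;
  try by [rewrite eq_sym | rewrite c_sym].
by move=> i j; rewrite addnC.
Qed.

Lemma num_alt_cycles_le_copies :
  num_alt_cycles <= 2 * (num_copies c P3o + num_copies c C4 + num_copies c C4bar).
Proof.
rewrite num_alt_cycles_card; set A := [set t | alt_cycle t].
set SX := [set t : 'I_n * 'I_n * 'I_n * 'I_n | c t.1.1.1 t.1.2].
set SY := [set t : 'I_n * 'I_n * 'I_n * 'I_n | c t.1.1.2 t.2].
have red_red : #|(A :&: SX) :&: SY| <= num_copies c C4.
  apply: (card_le_num_copies (g := fun '(a, b, x, d) => quad a b d x)).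
    by move=> [[[? ?] ?] ?] [[[? ?] ?] ?] /quad_inj [-> -> -> ->].
  move=> [[[a b] x] d] /setIP [/setIP [alt ax] bd]; rewrite !inE /= in alt ax bd.
  exact: alt_cycle_C4.
have red_blue : #|(A :&: SX) :\: SY| <= num_copies c P3o.
  apply: (card_le_num_copies (g := fun '(a, b, x, d) => quad x b d a)).
    by move=> [[[? ?] ?] ?] [[[? ?] ?] ?] /quad_inj [-> -> -> ->].
  move=> [[[a b] x] d] /setDP [/setIP [alt ax] /negbTE bd]; rewrite !inE /= in alt ax bd.
  exact: alt_cycle_P3o.
have blue_red : #|(A :\: SX) :&: SY| <= num_copies c P3o.
  apply: (card_le_num_copies (g := fun '(a, b, x, d) => quad b x a d)).
    by move=> [[[? ?] ?] ?] [[[? ?] ?] ?] /quad_inj [-> -> -> ->].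
  move=> [[[a b] x] d] /setIP [/setDP [alt /negbTE ax] bd]; rewrite !inE /= in alt ax bd.
  exact: alt_cycle_P3o'.
have blue_blue : #|(A :\: SX) :\: SY| <= num_copies c C4bar.
  apply: (card_le_num_copies (g := fun '(a, b, x, d) => quad a x b d)).
    by move=> [[[? ?] ?] ?] [[[? ?] ?] ?] /quad_inj [-> -> -> ->].
  move=> [[[a b] x] d] /setDP [/setDP [alt /negbTE ax] /negbTE bd].
  rewrite !inE /= in alt ax bd.
  exact: alt_cycle_C4bar.
rewrite -(cardsID SX A) -(cardsID SY (A :&: SX)) -(cardsID SY (A :\: SX)).
lia.
Qed.

End AlternatingCycles.

Lemma num_copies_ge_min_deg n (c : 'I_n -> 'I_n -> bool) E :
  sym_colouring c -> 0 < n ->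
  (forall v, E <= red_deg c v) -> (forall v, E <= blue_deg c v) ->
  E ^ 4 <= 10 ^ 5 * (num_copies c P3o + num_copies c C4 + num_copies c C4bar).
Proof.
move=> c_sym n_gt0 red_ge blue_ge.
apply: leq_trans (num_alt_cycles_ge_pow4 c_sym red_ge blue_ge n_gt0) _.
rewrite (leq_trans (leq_mul (leqnn _) (num_alt_cycles_le_copies c_sym))) // mulnA.
by rewrite leq_mul2r orbC.
Qed.

Local Open Scope ring_scope.

Theorem proposition2p2 (R : realFieldType) (eps : R) (n : nat)
    (c : 'I_n -> 'I_n -> bool) :
  0 < eps -> sym_colouring c -> locally_balanced eps c ->
  eps ^+ 4 * n%:R ^+ 4 / 10 ^+ 5 <=
    (num_copies c P3o + num_copies c C4 + num_copies c C4bar)%:R.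
Proof.
move=> eps_gt0 c_sym balanced.
have [n0 | n_gt0] := posnP n; first by rewrite [in n%:R]n0 expr0n mulr0 mul0r ler0n.
pose deg v := minn (red_deg c v) (blue_deg c v).
have [v _ v_min] := arg_minnP deg (isT : predT (Ordinal n_gt0)).
have red_ge u : (deg v <= red_deg c u)%N by rewrite (leq_trans (v_min u isT)) ?geq_minl.
have blue_ge u : (deg v <= blue_deg c u)%N by rewrite (leq_trans (v_min u isT)) ?geq_minr.
have epsn_le : eps * n%:R <= (deg v)%:R.
  by case: (balanced v); rewrite /deg /minn; case: ifP.
rewrite ler_pdivrMr ?exprn_gt0 ?ltr0n // -exprMn.
apply: le_trans (_ : (deg v)%:R ^+ 4 <= _).
  by apply: lerXn2r; rewrite ?nnegrE ?ler0n // mulr_ge0 ?ler0n ?ltW.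
by rewrite -natrX -natrX -natrM ler_nat mulnC num_copies_ge_min_deg.
Qed.
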